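(* Let $P=\{p_1,\dots,p_n\}\subset\mathbb{R}^2$ be in convex position, labeled counter-clockwise (indices mod $n$), and let $T$ be a triangulation of $P$. Let $d=(d_{ij})$ be the point of the polyhedron $Y$ satisfying $d_{ij}=0$ for all edges $ij$ of $T$ (the vertex of $Y$ corresponding to $T$). Then for every $i$, $$d_{i-1,i+1}=-\det(p_{i-1},p_i,p_{i+1})\bigl(\operatorname{Area}_T(p_i)-\det(p_{i-1},p_i,p_{i+1})\bigr).$$
   Context: $\det(q_0,q_1,q_2)$ is the determinant of the $3\times3$ matrix with columns $(q_0,1),(q_1,1),(q_2,1)$; with counter-clockwise labeling, $\det(p_i,p_j,p_k)>0$ iff $i,j,k$ are in cyclic order. $\operatorname{Area}_T(p_i)=\sum_{l=1}^{t-1}\det(p_i,p_{j_l},p_{j_{l+1}})$ where $p_{j_1},\dots,p_{j_t}$ are the neighbors of $p_i$ in $T$ in angular order from $p_{j_1}=p_{i+1}$ to $p_{j_t}=p_{i-1}$ (twice the total area of the triangles of $T$ at $p_i$). $Y\subset\mathbb{R}^{\binom n2}$ (coordinates $d_{ij}=d_{ji}$) is defined by $d_{ij}\le0$ for all pairs and, for every four distinct indices, $\sum w_{\alpha\beta}d_{\alpha\beta}=1$ over the six pairs of the quadruple, with $w_{\alpha\beta}=1/(\det(p_\alpha,p_\beta,p_\gamma)\det(p_\alpha,p_\beta,p_\delta))$, $\{\gamma,\delta\}$ the other two indices. *)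

From mathcomp Require Import all_boot all_order all_algebra.
Set Implicit Arguments. Unset Strict Implicit. Unset Printing Implicit Defensive.
Import Order.TTheory GRing.Theory Num.Theory.
Local Open Scope ring_scope.

Section Defs.
Variable R : realFieldType.

Definition det3 (q0 q1 q2 : R * R) : R :=
  \det (\matrix_(r < 3, c < 3)
          (let q := nth q0 [:: q0; q1; q2] c in
           if (r == 0 :> nat) then q.1 else if (r == 1 :> nat) then q.2 else 1)).

Variable n : nat.

(* i, j, k are pairwise distinct and in counter-clockwise cyclic order of indices *)
Definition cyclic (i j k : 'I_n) : bool :=
  [&& i != j, j != k, i != k &
      ((j + n - i) %% n < (k + n - i) %% n)%N].

Definition ccw_convex (p : 'I_n -> R * R) : Prop :=
  forall i j k : 'I_n, (0 < det3 (p i) (p j) (p k)) = cyclic i j k.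

Definition seg_cross (p : 'I_n -> R * R) (a b c d : 'I_n) : bool :=
  (det3 (p a) (p b) (p c) * det3 (p a) (p b) (p d) < 0) &&
  (det3 (p c) (p d) (p a) * det3 (p c) (p d) (p b) < 0).

Definition triangulation (p : 'I_n -> R * R) (T : rel 'I_n) : Prop :=
  [/\ forall i, ~~ T i i,
      forall i j, T i j = T j i,
      forall a b c d, T a b -> T c d -> ~~ seg_cross p a b c d &
      forall a b, a != b -> ~~ T a b ->
        exists c d, T c d /\ seg_cross p a b c d].

Definition nbrs_sorted (p : 'I_n -> R * R) (T : rel 'I_n) (i : 'I_n) : seq 'I_n :=
  sort (fun j k => 0 < det3 (p i) (p j) (p k)) [seq j <- enum 'I_n | T i j].

Definition AreaT (p : 'I_n -> R * R) (T : rel 'I_n) (i : 'I_n) : R :=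
  let s := nbrs_sorted p T i in
  \sum_(jk <- zip s (behead s)) det3 (p i) (p jk.1) (p jk.2).

(* weighted term w_{ab} d_{ab}, {c,e} being the other two indices *)
Definition wterm (p : 'I_n -> R * R) (d : 'I_n -> 'I_n -> R) (a b c e : 'I_n) : R :=
  d a b / (det3 (p a) (p b) (p c) * det3 (p a) (p b) (p e)).

Definition inY (p : 'I_n -> R * R) (d : 'I_n -> 'I_n -> R) : Prop :=
  (forall i j, d i j = d j i) /\
  (forall i j, i != j -> d i j <= 0) /\
  (forall a b c e : 'I_n, uniq [:: a; b; c; e] ->
     wterm p d a b c e + wterm p d a c b e + wterm p d a e b c
   + wterm p d b c a e + wterm p d b e a c + wterm p d c e a b = 1).

End Defs.

(* The edges of T at p_i, listed in angular order, form a fan from p_{i+1} to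
   p_{i-1} whose consecutive spokes are again edges of T: a chord between two
   consecutive spokes would have to cross one of them.  For consecutive spokes
   w, z of the fan, the relation defining Y on the quadruple (p_i, p_{i+1}, p_w,
   p_z) has only two nonzero terms, because d vanishes on T; it expresses
   d_{i+1,z} through d_{i+1,w}.  Induction along the fan, with the cocycle
   identity det(x,w,z) = det(c,x,w) + det(c,w,z) - det(c,x,z), accumulates the
   triangle areas into Area_T(p_i). *)

From mathcomp Require Import all_boot all_order all_algebra.
From mathcomp Require Import ring zify.
Import Order.TTheory GRing.Theory Num.Theory.
Set Implicit Arguments. Unset Strict Implicit. Unset Printing Implicit Defensive.

Lemma eq_in_merge (T : eqType) (le1 le2 : rel T) (u v : seq T) :
  {in u & v, le1 =2 le2} -> merge le1 u v = merge le2 u v.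
Proof.
elim: u v => [|x u IHu] v //; elim: v => [|y v IHv] //= le12.
rewrite le12 ?mem_head //; case: ifP => _; congr cons.
  by apply: IHu => x' y' x'u y'v; apply: le12; rewrite // inE x'u orbT.
by apply: IHv => x' y' x'u y'v; apply: le12; rewrite // inE y'v orbT.
Qed.

Lemma perm_merge_sort_push (T : eqType) (le : rel T) u ss :
  perm_eq (flatten (merge_sort_push le u ss)) (u ++ flatten ss).
Proof.
elim: ss u => [|[|y v] ss IHss] u /=; rewrite ?cats0 //.
by rewrite (permPl (IHss _)) -cat_cons catA perm_cat2r perm_merge perm_catC.
Qed.

(* [nbrs_sorted] sorts with [0 < det], which is irreflexive and hence not total.
   On a duplicate-free list merge sort never compares an element with itself,
   so the order may be replaced by its reflexive closure. *)
Section SortEqIn.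
Variables (T : eqType) (le1 le2 : rel T) (s : seq T).
Hypothesis le12 : {in s &, forall x y, x != y -> le1 x y = le2 x y}.

Let uniq_sub u := uniq u && all (mem s) u.

Let uniq_sub_perm u v : perm_eq u v -> uniq_sub u = uniq_sub v.
Proof. by move=> uv; rewrite /uniq_sub (perm_uniq uv) (perm_all _ uv). Qed.

Let uniq_sub_catl u v : uniq_sub (u ++ v) -> uniq_sub u.
Proof. by rewrite /uniq_sub cat_uniq all_cat => /andP[/andP[-> _] /andP[-> _]]. Qed.

Let eq_merge_sub u v : uniq_sub (u ++ v) -> merge le1 u v = merge le2 u v.
Proof.
rewrite /uniq_sub cat_uniq all_cat => /andP[/and3P[_ uv _] /andP[/allP us /allP vs]].
apply: eq_in_merge => x y xu yv; apply: le12; [exact: us | exact: vs |].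
by apply: contraNneq uv => exy; apply/hasP; exists y; rewrite // -exy.
Qed.

Let eq_push_sub u ss : uniq_sub (u ++ flatten ss) ->
  merge_sort_push le1 u ss = merge_sort_push le2 u ss.
Proof.
elim: ss u => [|[|y v] ss IHss] u //= u_sub.
have perm_vu : perm_eq (u ++ y :: v ++ flatten ss) (((y :: v) ++ u) ++ flatten ss).
  by rewrite -cat_cons catA perm_cat2r perm_catC.
have vu_sub : uniq_sub ((y :: v) ++ u) by apply: (uniq_sub_catl (v := flatten ss)); rewrite -(uniq_sub_perm perm_vu).
rewrite -eq_merge_sub //; congr cons; apply: IHss.
by rewrite (uniq_sub_perm (v := ((y :: v) ++ u) ++ flatten ss)) ?perm_cat2r ?perm_merge //
  -(uniq_sub_perm perm_vu).
Qed.

Let eq_pop_sub u ss : uniq_sub (u ++ flatten ss) ->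
  merge_sort_pop le1 u ss = merge_sort_pop le2 u ss.
Proof.
elim: ss u => [|v ss IHss] u //= u_sub.
have perm_vu : perm_eq (u ++ v ++ flatten ss) ((v ++ u) ++ flatten ss).
  by rewrite catA perm_cat2r perm_catC.
have vu_sub : uniq_sub (v ++ u) by apply: (uniq_sub_catl (v := flatten ss)); rewrite -(uniq_sub_perm perm_vu).
rewrite -eq_merge_sub //; apply: IHss.
by rewrite (uniq_sub_perm (v := (v ++ u) ++ flatten ss)) ?perm_cat2r ?perm_merge //
  -(uniq_sub_perm perm_vu).
Qed.

Let eq_sort_rec1_sub ss t : uniq_sub (flatten ss ++ t) -> sort_rec1 le1 ss t = sort_rec1 le2 ss t.
Proof.
elim: t ss => [|x t IHt] ss /= u_sub; first by apply: eq_pop_sub; rewrite cats0 in u_sub.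
have perm_x : perm_eq (flatten ss ++ x :: t) (([:: x] ++ flatten ss) ++ t).
  by rewrite -cat1s catA perm_cat2r perm_catC.
rewrite -eq_push_sub; last by apply: (uniq_sub_catl (v := t)); rewrite -(uniq_sub_perm perm_x).
apply: IHt; rewrite (uniq_sub_perm (v := ([:: x] ++ flatten ss) ++ t)) -?(uniq_sub_perm perm_x) //.
by rewrite perm_cat2r perm_merge_sort_push.
Qed.

Lemma eq_in_sort : uniq s -> sort le1 s = sort le2 s.
Proof. by move=> us; rewrite !sortE eq_sort_rec1_sub //= /uniq_sub us; apply/allP. Qed.

End SortEqIn.

Lemma path_of_consecutive (T : Type) (e : rel T) x s :
  (forall s1 u v s2, x :: s = s1 ++ u :: v :: s2 -> e u v) -> path e x s.
Proof.
elim: s x => [|y s IHs] x //= cons_e; rewrite (cons_e [::] x y s) //=.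
by apply: IHs => s1 u v s2 def_s; apply: (cons_e (x :: s1)); rewrite def_s.
Qed.

Section SortedStrict.
Variables (T : eqType) (r : rel T).
Hypotheses (r_trans : transitive r) (r_irr : irreflexive r).

Lemma sorted_gap_path (e : rel T) x s : sorted r (x :: s) ->
  {in x :: s &, forall u v, r u v -> {in x :: s, forall z, ~~ (r u z && r z v)} -> e u v} ->
  path e x s.
Proof.
move=> sorted_s gap_e; apply: path_of_consecutive => s1 u v s2 def_s.
move: sorted_s; rewrite def_s sorted_pairwise // pairwise_cat.
rewrite !pairwise_cons /= => /and3P[/allrelP s1_u _ /and3P[/andP[uv _] v_s2 _]].
apply: gap_e => //; rewrite ?def_s ?mem_cat ?inE ?eqxx ?orbT // => z.
rewrite mem_cat !inE => /or4P[zs1|/eqP->|/eqP->|zs2].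
- by apply/negP => /andP[/(r_trans (s1_u _ _ zs1 (mem_head _ _)))]; rewrite r_irr.
- by rewrite r_irr.
- by rewrite r_irr andbF.
- by apply/negP => /andP[_ /(r_trans)/(_ ((allP v_s2) _ zs2))]; rewrite r_irr.
Qed.

Lemma sorted_first_last s b a : sorted r s -> b \in s -> a \in s -> b != a ->
  (forall z, ~~ r z b) -> (forall z, ~~ r a z) -> exists l, s = b :: rcons l a.
Proof.
rewrite sorted_pairwise //; case: s => [|x s] //= /andP[/allP x_s s_s] b_s a_s ba b_min a_max.
have def_x : x = b.
  by move: b_s; rewrite inE => /orP[/eqP //|/x_s xb]; move: (b_min x); rewrite xb.
move: a_s ba s_s; rewrite {x x_s b_s}def_x; case/lastP: s => [|l y].
  by rewrite inE => /eqP->; rewrite eqxx.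
rewrite inE mem_rcons inE pairwise_rcons => a_in ba /andP[/allP l_y _].
exists l; congr (_ :: rcons _ _); case/or3P: a_in => [/eqP ab|/eqP //|al].
  by rewrite ab eqxx in ba.
by move: (a_max y); rewrite l_y.
Qed.
End SortedStrict.

Lemma sorted_strict (T : eqType) (r : rel T) s :
  uniq s -> sorted (fun x y => (x == y) || r x y) s -> sorted r s.
Proof.
case: s => // x s; elim: s x => [|y s IHs] x //= /andP[xys ys] /andP[xy ps].
apply/andP; split; last exact: IHs.
by case/orP: xy => // /eqP xy; rewrite xy mem_head in xys.
Qed.

Local Open Scope ring_scope.

Lemma det3E (R : realFieldType) (a b c : R * R) :
  det3 a b c = a.1 * b.2 - a.1 * c.2 - b.1 * a.2 + b.1 * c.2 + c.1 * a.2 - c.1 * b.2.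
Proof.
rewrite /det3 (expand_det_row _ ord0) !big_ord_recr big_ord0 /= /cofactor.
rewrite !(expand_det_row _ ord0) !big_ord_recr !big_ord0 /= /cofactor !det_mx11 !mxE /=.
ring.
Qed.

Section CyclicOrder.
Variable n : nat.
Implicit Types i j k a b c e u v : 'I_n.

Lemma cyclicE a b c :
  cyclic a b c = [|| (a < b < c)%N, (b < c < a)%N | (c < a < b)%N].
Proof.
have modE x y : (x < n -> y < n -> (y + n - x) %% n = if x <= y then y - x else y + n - x)%N.
  move=> hx hy; case: leqP => hxy; last by rewrite modn_small //; lia.
  by rewrite -addnBAC // modnDr modn_small //; lia.
rewrite /cyclic !modE // -!val_eqE; case: a b c => [a ?] [b ?] [c ?] /=.
by case: (leqP a b) => ?; case: (leqP a c) => ?; apply/idP/idP; lia.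
Qed.

Lemma ordSE i : val (ordS i) = if i.+1 == n then 0%N else i.+1.
Proof.
rewrite /=; case: eqP => [->|i1_neq]; first by rewrite modnn.
by rewrite modn_small //; have := ltn_ord i; lia.
Qed.

Lemma ord_predE i : val (ord_pred i) = if val i == 0%N then n.-1 else (val i).-1.
Proof.
have := ltn_ord i; rewrite /=; case: eqP => [->|i_neq0] i_lt.
  by rewrite add0n modn_small //; lia.
by rewrite -subn1 -addnBAC ?lt0n ?modnDr ?modn_small //; apply/eqP; lia.
Qed.

Definition separates a b c e :=
  (cyclic a b c && cyclic a e b) || (cyclic a c b && cyclic a b e).

Ltac cyclic_lia := rewrite ?/separates ?cyclicE -?val_eqE /=; lia.

Lemma cyclic_trans i : transitive (cyclic i).
Proof. move=> j k l; cyclic_lia. Qed.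

Lemma cyclic_irr i : irreflexive (cyclic i).
Proof. move=> j; cyclic_lia. Qed.

Lemma cyclic_total i j k : i != j -> i != k -> j != k -> cyclic i j k || cyclic i k j.
Proof. cyclic_lia. Qed.

Lemma separatesC a b c e : separates a b c e = separates b a c e.
Proof. apply/idP/idP; cyclic_lia. Qed.

Lemma separatesCr a b c e : separates a b c e = separates a b e c.
Proof. by rewrite /separates orbC; congr orb; apply: andbC. Qed.

Lemma separates_sym a b c e : separates a b c e -> separates c e a b.
Proof. cyclic_lia. Qed.

Lemma separates_fan i u v c e : cyclic i u v -> separates u v c e ->
  [|| separates c e i u, separates c e i v,
      (c == i) && cyclic i u e && cyclic i e v
    | (e == i) && cyclic i u c && cyclic i c v].
Proof.
move=> iuv; wlog sep_ce : c e / cyclic u v c && cyclic u e v.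
  move=> wlog_ce sep_uv; case/orP: (sep_uv) => [/wlog_ce/(_ sep_uv)//|sep_ec].
  have := wlog_ce e c; rewrite andbC sep_ec (separatesCr u v e) sep_uv.
  by rewrite !(separatesC e c) => /(_ isT isT) /or4P[] ->; rewrite ?orbT.
move=> _; case/andP: sep_ce => uvc uev.
have [->|ci] := eqVneq c i.
  by rewrite /= (_ : cyclic i u e && cyclic i e v) ?orbT //; move: uev iuv; cyclic_lia.
have [icu|icu] := boolP (cyclic i c u).
  by rewrite (_ : separates c e i u) //; move: icu uvc uev iuv; cyclic_lia.
by rewrite (_ : separates c e i v) ?orbT //; move: ci icu uvc uev iuv; cyclic_lia.
Qed.

Lemma cyclic_ordS i j : ~~ cyclic i j (ordS i).
Proof. have := ltn_ord i; have := ltn_ord j; rewrite cyclicE ordSE; case: eqP; cyclic_lia. Qed.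

Lemma cyclic_ord_pred i j : ~~ cyclic i (ord_pred i) j.
Proof. have := ltn_ord i; have := ltn_ord j; rewrite cyclicE ord_predE; case: eqP; cyclic_lia. Qed.

Lemma separates_ordS i c e : ~~ separates i (ordS i) c e.
Proof.
have := ltn_ord i; have := ltn_ord c; have := ltn_ord e.
by rewrite /separates !cyclicE ordSE; case: eqP; cyclic_lia.
Qed.

Lemma separates_ord_pred i c e : ~~ separates i (ord_pred i) c e.
Proof.
have := ltn_ord i; have := ltn_ord c; have := ltn_ord e.
by rewrite /separates !cyclicE ord_predE; case: eqP; cyclic_lia.
Qed.

Lemma ordS_ord_pred_uniq i : (3 <= n)%N -> uniq [:: i; ordS i; ord_pred i].
Proof.
move=> n_ge3; have := ltn_ord i; rewrite /= !inE -!val_eqE ordSE ord_predE /=.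
by case: ifP => /eqP ?; case: ifP => /eqP ? /=; lia.
Qed.

End CyclicOrder.

Lemma det3_cycle (R : realFieldType) (a b c : R * R) : det3 a b c = det3 b c a.
Proof. by rewrite !det3E; ring. Qed.

Lemma det3_swap23 (R : realFieldType) (a b c : R * R) : det3 a b c = - det3 a c b.
Proof. by rewrite !det3E; ring. Qed.

Lemma det3_split (R : realFieldType) (c x y z : R * R) :
  det3 x y z = det3 c x y + det3 c y z - det3 c x z.
Proof. by rewrite !det3E; ring. Qed.

Section ConvexPosition.
Variables (R : realFieldType) (n : nat) (p : 'I_n -> R * R).
Hypothesis p_convex : ccw_convex p.
Local Notation D a b c := (det3 (p a) (p b) (p c)).

Lemma det3_lt0 a b c : (D a b c < 0) = cyclic a c b.
Proof. by rewrite det3_swap23 oppr_lt0 p_convex. Qed.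

Lemma det3_neq0 a b c : a != b -> a != c -> b != c -> D a b c != 0.
Proof. by move=> ab ac bc; rewrite neq_lt det3_lt0 p_convex orbC cyclic_total. Qed.

Lemma det3_mul_lt0 a b c e : (D a b c * D a b e < 0) = separates a b c e.
Proof.
rewrite mulr_lt0 !neq_lt !det3_lt0 !p_convex /separates !cyclicE -?val_eqE /=.
by apply/idP/idP; lia.
Qed.

Lemma seg_crossE a b c e : seg_cross p a b c e = separates a b c e.
Proof.
rewrite /seg_cross !det3_mul_lt0.
by apply/andP/idP => [[]//|sep]; split; last exact: separates_sym.
Qed.

Variable T : rel 'I_n.
Hypothesis T_triangulation : triangulation p T.

Lemma triangulation_edge a b : a != b -> (forall c e, ~~ separates a b c e) -> T a b.
Proof.
case: T_triangulation => _ _ _ T_max ab no_sep; apply/negPn/negP => /(T_max _ _ ab).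
by case=> c [e [_]]; rewrite seg_crossE (negbTE (no_sep c e)).
Qed.

Lemma fan_gap_edge i u v : T i u -> T i v -> cyclic i u v ->
  (forall z, T i z -> ~~ (cyclic i u z && cyclic i z v)) -> T u v.
Proof.
case: T_triangulation => T_irr T_sym T_nocross T_max iu iv iuv gap.
have uv : u != v by case/and4P: iuv.
apply/negPn/negP => /(T_max _ _ uv) [c [e [ce]]].
rewrite seg_crossE => /(separates_fan iuv) /or4P[].
- by apply/negP; rewrite -seg_crossE T_nocross.
- by apply/negP; rewrite -seg_crossE T_nocross.
- by case/andP=> /andP[/eqP ci uie] iev; move: (gap e); rewrite -{1}ci ce uie iev => /(_ isT).
- by case/andP=> /andP[/eqP ei uic] icv; move: (gap c); rewrite -{1}ei T_sym ce uic icv => /(_ isT).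
Qed.

Lemma mem_nbrs_sorted i z : (z \in nbrs_sorted p T i) = T i z.
Proof. by rewrite mem_sort mem_filter mem_enum andbT. Qed.

Lemma nbrs_sorted_uniq i : uniq (i :: nbrs_sorted p T i).
Proof.
case: T_triangulation => T_irr _ _ _.
by rewrite /= mem_nbrs_sorted T_irr sort_uniq filter_uniq ?enum_uniq.
Qed.

Lemma sorted_nbrs i : sorted (cyclic i) (nbrs_sorted p T i).
Proof.
set s := [seq j <- enum 'I_n | T i j].
have s_i : {in s, forall j, i != j}.
  by case: T_triangulation => T_irr _ _ _ j; rewrite mem_filter => /andP[+ _]; apply: contraTneq => <-.
have s_uniq : uniq s by rewrite filter_uniq ?enum_uniq.
rewrite /nbrs_sorted (eq_in_sort (le2 := fun j k => (j == k) || cyclic i j k)) //.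
  apply: sorted_strict; first by rewrite sort_uniq.
  apply: (sort_sorted_in (P := mem s)); last exact/allP.
  by move=> j k js ks; have [//|jk] /= := eqVneq j k; rewrite cyclic_total ?s_i.
by move=> j k js ks jk; rewrite /= (negbTE jk) p_convex.
Qed.

Lemma path_nbrs_sorted i x s : nbrs_sorted p T i = x :: s -> path T x s.
Proof.
move=> s_def; apply: (sorted_gap_path (@cyclic_trans _ i) (@cyclic_irr _ i)).
  by rewrite -s_def sorted_nbrs.
move=> u v; rewrite -s_def !mem_nbrs_sorted => iu iv iuv gap.
apply: (fan_gap_edge iu iv iuv) => z; by rewrite -mem_nbrs_sorted; apply: gap.
Qed.

Lemma nbrs_sorted_ends i : (3 <= n)%N ->
  exists l, nbrs_sorted p T i = ordS i :: rcons l (ord_pred i).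
Proof.
move=> n_ge3; have := ordS_ord_pred_uniq i n_ge3; rewrite /= !inE negb_or.
case/andP=> /andP[iS iP] /andP[SP _].
apply: (sorted_first_last (@cyclic_trans _ i) (sorted_nbrs i) _ _ SP).
- by rewrite mem_nbrs_sorted triangulation_edge // => c e; apply: separates_ordS.
- by rewrite mem_nbrs_sorted triangulation_edge // => c e; apply: separates_ord_pred.
- exact: cyclic_ordS.
- exact: cyclic_ord_pred.
Qed.

End ConvexPosition.

Lemma sum_zip_pairmap (V : nmodType) (T : Type) (f : T -> T -> V) x s :
  \sum_(jk <- zip (x :: s) s) f jk.1 jk.2 = \sum_(t <- pairmap f x s) t.
Proof. by elim: s x => [|y s IHs] x; rewrite ?big_nil // !big_cons IHs. Qed.

Lemma pairmap_rcons (T U : Type) (f : T -> T -> U) x s z :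
  pairmap f x (rcons s z) = rcons (pairmap f x s) (f (last x s) z).
Proof. by rewrite -!cats1 pairmap_cat. Qed.

Section Fan.
Variables (R : realFieldType) (n : nat) (p : 'I_n -> R * R).
Variables (T : rel 'I_n) (d : 'I_n -> 'I_n -> R).
Hypotheses (p_convex : ccw_convex p) (d_Y : inY p d) (d_T : forall i j, T i j -> d i j = 0).
Local Notation D a b c := (det3 (p a) (p b) (p c)).

Lemma fan_diagonal c x l z :
  uniq (c :: x :: rcons l z) -> all (T c) (x :: rcons l z) -> path T x (rcons l z) ->
  d x z = - D c x z * (\sum_(t <- pairmap (fun u v => D c u v) x (rcons l z)) t - D c x z).
Proof.
elim/last_ind: l z => [|l w IHl] z.
  by move=> _ _ /andP[xz _]; rewrite d_T //= big_seq1 subrr mulr0.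
rewrite -!rcons_cons rcons_uniq all_rcons rcons_path pairmap_rcons big_rcons last_rcons.
move=> /andP[z_fresh cxw_uniq] /andP[czT c_xw] /andP[xw_path wzT].
have IH := IHl w cxw_uniq c_xw xw_path.
rewrite /=; set S := \sum_(t <- _) t in IH *.
have sub_cxw : subseq [:: c; x; w] (c :: x :: rcons l w).
  by rewrite /= !eqxx sub1seq mem_rcons mem_head.
have cxwz_uniq : uniq [:: c; x; w; z].
  rewrite -[[:: c; x; w; z]]/(rcons [:: c; x; w] z) rcons_uniq (subseq_uniq sub_cxw) // andbT.
  by apply: contra z_fresh; apply: mem_subseq.
have := cxwz_uniq; rewrite /= !inE !negb_or.
case/and4P=> /and3P[cx cw cz] /andP[xw xz] wz _.
have [cxT cwT] : T c x /\ T c w.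
  by move: c_xw; rewrite all_rcons => /andP[-> /andP[->]].
(* d vanishes on cx, cw, cz and wz: the relation of Y at (c, x, w, z) links d x w to d x z. *)
have := d_Y.2.2 c x w z cxwz_uniq; rewrite /wterm.
rewrite (d_T cxT) (d_T cwT) (d_T czT) (d_T wzT) !mul0r !add0r addr0 IH.
rewrite -(det3_cycle (p c) (p x) (p w)) -(det3_cycle (p c) (p x) (p z)).
rewrite (det3_swap23 (p x) (p z)) (det3_split (p c) (p x) (p w) (p z)) => quad.
have A0 : D c x w != 0 by apply: det3_neq0.
have Z0 : D c x z != 0 by apply: det3_neq0.
have B0 : D c x w + D c w z - D c x z != 0.
  by rewrite -det3_split; apply: det3_neq0.
set B := D c x w + D c w z - D c x z in quad B0.
have -> : d x z = (1 - - D c x w * (S - D c x w) / (D c x w * B)) * (D c x z * - B).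
  by rewrite -quad; field; rewrite B0 A0 Z0.
by rewrite /B; field; rewrite A0 -/B B0.
Qed.
End Fan.

Theorem lemma5p4 (R : realFieldType) (n : nat) (p : 'I_n -> R * R)
    (T : rel 'I_n) (d : 'I_n -> 'I_n -> R) :
  (3 <= n)%N ->
  ccw_convex p ->
  triangulation p T ->
  inY p d ->
  (forall i j, T i j -> d i j = 0) ->
  forall i : 'I_n,
    d (ord_pred i) (ordS i) =
      - det3 (p (ord_pred i)) (p i) (p (ordS i))
        * (AreaT p T i - det3 (p (ord_pred i)) (p i) (p (ordS i))).
Proof.
move=> n_ge3 p_convex T_tri d_Y d_T i.
have [l s_def] := nbrs_sorted_ends p_convex T_tri i n_ge3.
rewrite (d_Y.1 (ord_pred i)) (det3_cycle (p (ord_pred i))) /AreaT s_def /=.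
rewrite (sum_zip_pairmap (fun u v => det3 (p i) (p u) (p v))).
apply: (fan_diagonal p_convex d_Y d_T).
- by rewrite -s_def nbrs_sorted_uniq.
- by apply/allP => z; rewrite -s_def mem_nbrs_sorted.
- exact: (path_nbrs_sorted p_convex T_tri s_def).
Qed.
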